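(* Let $X_1,\dots,X_n$ be independent real-valued random variables. Then \[E\Big[\Big|\sum_{k=1}^nX_k\Big|\wedge1\Big]\le\Big(\sum_{k=1}^nE[\tau^2(X_k)]+\Big(\sum_{k=1}^nE[\tau(X_k)]\Big)^2\Big)^{1/2}+\sum_{k=1}^nE[\tau^2(X_k)].\]
   Context: $\tau\colon\mathbb R\to\mathbb R$ is the truncation function $\tau(\alpha)=\alpha$ if $|\alpha|\le1$ and $\tau(\alpha)=\alpha/|\alpha|$ if $|\alpha|>1$. *)

From HB Require Import structures.
From mathcomp Require Import all_boot all_order all_algebra.
From mathcomp Require Import all_classical all_reals all_analysis.
Set Implicit Arguments. Unset Strict Implicit. Unset Printing Implicit Defensive.
Import Order.TTheory GRing.Theory Num.Theory.
Local Open Scope classical_set_scope.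
Local Open Scope ring_scope.

Definition tau {R : realType} (a : R) : R :=
  if `|a| <= 1 then a else a / `|a|.

Definition mutually_independent_RV {d} {T : measurableType d} {R : realType}
  (P : probability T R) (n : nat) (X : 'I_n -> {RV P >-> R}) : Prop :=
  forall (J : {set 'I_n}) (B : 'I_n -> set R),
    (forall j, j \in J -> measurable (B j)) ->
    P (\bigcap_(j in [set j | j \in J]) (X j @^-1` B j)) =
    (\prod_(j in J) P (X j @^-1` B j))%E.

From mathcomp Require Import all_boot all_order all_algebra.
From mathcomp Require Import all_classical all_reals all_analysis.
From mathcomp Require Import measurable_realfun zify lra.
Import Order.TTheory GRing.Theory Num.Theory.
Local Open Scope ring_scope.
Local Open Scope classical_set_scope.

(* If every [|X_k| <= 1] then [\sum_k X_k = \sum_k tau (X_k)]; otherwise some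
   [tau (X_k) ^+ 2 = 1].  Hence pointwise
     [min (|\sum_k X_k|, 1) <= |\sum_k tau (X_k)| + \sum_k tau (X_k) ^+ 2].
   Taking expectations, [E |S| <= sqrt (E [S ^+ 2])] for [S = \sum_k tau (X_k)], and
   by independence the cross terms [E [tau (X_j) tau (X_k)]], [j != k], factor, so that
   [E [S ^+ 2] <= \sum_k E [tau (X_k) ^+ 2] + (\sum_k E [tau (X_k)]) ^+ 2].
   The factorisation is obtained by approximating the bounded variables [tau (X_k)]
   uniformly by simple functions with values in the grid [Z / (m + 1)], for which it
   is the product rule for independent events. *)

Lemma normr_mulB_le (R : realFieldType) (a b a' b' e : R) : `|a| <= 1 -> `|b'| <= 1 ->
  `|a - a'| <= e -> `|b - b'| <= e -> `|a * b - a' * b'| <= e + e.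
Proof.
move=> a1 b'1 aa' bb'.
have -> : a * b - a' * b' = a * (b - b') + (a - a') * b'.
  by rewrite mulrBr mulrBl addrA subrK.
apply: le_trans (ler_normD _ _) _; rewrite !normrM lerD//.
  by rewrite -[e]mul1r ler_pM.
by rewrite -[e]mulr1 ler_pM.
Qed.

Lemma normr_le_divSn_eq0 (R : archiFieldType) (x c : R) :
  (forall m : nat, `|x| <= c / m.+1%:R) -> x = 0.
Proof.
move=> small; apply/eqP/negPn/negP => x_neq0; have x_gt0 : 0 < `|x| by rewrite normr_gt0.
have := small (Num.truncn (c / `|x|)); rewrite ler_pdivlMr// mulrC -ler_pdivlMr//.
by rewrite leNgt truncnS_gt.
Qed.

Lemma measurable_funT_preimage {d d' : measure_display} {T : measurableType d}
  {U : measurableType d'} {f : T -> U} {A : set U} :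
  measurable_fun setT f -> measurable A -> measurable (f @^-1` A).
Proof. by move=> mf mA; rewrite -[_ @^-1` _]setTI; exact: mf. Qed.

Section bounded_measurable.
Context {d : measure_display} {T : measurableType d} {R : realType}.
Implicit Types f g : T -> R.

Definition bounded_measurable f :=
  measurable_fun setT f /\ exists c : R, forall x, `|f x| <= c.

Lemma bounded_measurable_cst (a : R) : bounded_measurable (fun=> a).
Proof. by split => //; exists `|a|. Qed.

Lemma bounded_measurableD f g : bounded_measurable f -> bounded_measurable g ->
  bounded_measurable (fun x => f x + g x).
Proof.
move=> [mf [a fa]] [mg [b gb]]; split; first exact: measurable_funD.
by exists (a + b) => x; rewrite (le_trans (ler_normD _ _))// lerD.
Qed.

Lemma bounded_measurableB f g : bounded_measurable f -> bounded_measurable g ->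
  bounded_measurable (fun x => f x - g x).
Proof.
move=> [mf [a fa]] [mg [b gb]]; split; first exact: measurable_funB.
by exists (a + b) => x; rewrite (le_trans (ler_normB _ _))// lerD.
Qed.

Lemma bounded_measurableM f g : bounded_measurable f -> bounded_measurable g ->
  bounded_measurable (fun x => f x * g x).
Proof.
move=> [mf [a fa]] [mg [b gb]]; split; first exact: measurable_funM.
by exists (a * b) => x; rewrite normrM ler_pM.
Qed.

Lemma bounded_measurable_normr f : bounded_measurable f ->
  bounded_measurable (fun x => `|f x|).
Proof.
move=> [mf [a fa]]; split; first exact: measurableT_comp.
by exists a => x; rewrite normr_id.
Qed.

Lemma bounded_measurable_sum (I : Type) (s : seq I) (F : I -> T -> R) :
  (forall i, bounded_measurable (F i)) ->
  bounded_measurable (fun x => \sum_(i <- s) F i x).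
Proof.
move=> bF; elim: s => [|i s IH].
  by under eq_fun do rewrite big_nil; exact: bounded_measurable_cst.
by under eq_fun do rewrite big_cons; exact: bounded_measurableD.
Qed.

Lemma bounded_measurable_indic (A : set T) : measurable A ->
  bounded_measurable (\1_A : T -> R).
Proof.
move=> mA; split; first exact: measurable_indic.
by exists 1 => x; rewrite indicE; case: (x \in A) => /=; rewrite ?normr1 ?normr0.
Qed.

End bounded_measurable.

Lemma bounded_measurable_comp {d : measure_display} {T : measurableType d} {R : realType}
  {h : R -> R} {f : T -> R} :
  bounded_measurable h -> measurable_fun setT f -> bounded_measurable (h \o f).
Proof.
by move=> [mh [c hc]] mf; split; [exact: measurableT_comp|exists c => x; exact: hc].
Qed.

Section tau.
Context {R : realType}.
Implicit Types a : R.

Lemma tau_clamp a : tau a = Num.max (-1) (Num.min a 1).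
Proof.
rewrite /tau; case: ifPn => [|ha].
  by rewrite ler_norml => /andP[h1 h2]; rewrite (min_idPl h2) (max_idPr h1).
rewrite -ltNge in ha; have [a0|a0] := leP 0 a.
  rewrite ger0_norm // in ha *; rewrite divff ?gt_eqF ?(lt_trans _ ha)//.
  by rewrite (min_idPr (ltW ha)) (max_idPr (le_trans (lerN10 R) ler01)).
rewrite ltr0_norm // in ha *; rewrite invrN mulrN divff ?lt_eqF//.
rewrite (min_idPl (le_trans (ltW a0) ler01)); apply/esym/max_idPl.
by rewrite -lerN2 opprK ltW.
Qed.

Lemma measurable_tau : measurable_fun setT (@tau R).
Proof.
rewrite (_ : tau = (fun=> -1) \max (fun x => Num.min x 1)); last first.
  by apply/funext => x; rewrite tau_clamp.
exact/measurable_maxr/measurable_minr.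
Qed.

Lemma normr_tau_le1 a : `|tau a| <= 1.
Proof.
rewrite tau_clamp ler_norml le_max lexx /= ge_max ge_min lexx orbT andbT.
by rewrite (le_trans (lerN10 R) ler01).
Qed.

Lemma bounded_measurable_tau : bounded_measurable (@tau R).
Proof. by split; [exact: measurable_tau|exists 1; exact: normr_tau_le1]. Qed.

Lemma tau_id a : `|a| <= 1 -> tau a = a.
Proof. by rewrite /tau => ->. Qed.

Lemma tau_sqr_gt1 a : 1 < `|a| -> tau a ^+ 2 = 1.
Proof.
rewrite /tau => h; rewrite leNgt h /= expr_div_n real_normK ?num_real//.
by rewrite divff// sqrf_eq0 -normr_eq0 gt_eqF// (lt_trans _ h).
Qed.

Lemma min_normr_sum_le (I : finType) (x : I -> R) :
  Num.min `|\sum_i x i| 1 <= `|\sum_i tau (x i)| + \sum_i tau (x i) ^+ 2.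
Proof.
have sqr_sum_ge0 : 0 <= \sum_i tau (x i) ^+ 2 by rewrite sumr_ge0// => i _; exact: sqr_ge0.
have [small|] := boolP [forall i, `|x i| <= 1].
  rewrite ge_min (eq_bigr (tau \o x)) ?lerDl ?sqr_sum_ge0// => i _.
  by rewrite /= tau_id//; exact: (forallP small).
move=> /forallPn[i]; rewrite -ltNge => /tau_sqr_gt1 tau_i.
rewrite ge_min; apply/orP; right; rewrite [X in _ + X](bigD1 i)//= tau_i.
by rewrite addrCA lerDl addr_ge0 ?sumr_ge0// => *; exact: sqr_ge0.
Qed.

End tau.

Section grid_step.
Context {R : realType} (m : nat).
Local Notation M := m.+1.
Implicit Types r : R.

Definition grid_cell (z : int) : set R := [set r | Num.floor (M%:R * r) = z].

(* On [-1, 1] this is [floor (M r) / M]; it is written as a combination of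
   indicators so that its composite with a random variable is a simple function. *)
Definition grid_step r : R :=
  \sum_(i < (2 * M).+1) ((i%:Z - M%:Z)%:~R / M%:R) * \1_(grid_cell (i%:Z - M%:Z)) r.

Lemma measurable_grid_cell z : measurable (grid_cell z).
Proof.
have -> : grid_cell z = (fun r => M%:R * r) @^-1` `[z%:~R, (z + 1)%:~R[.
  by apply/seteqP; split => r /=; rewrite in_itv /= -floor_eq => /eqP.
rewrite -[X in measurable X]setTI; exact: mulrl_measurable.
Qed.

Lemma floor_grid_bound r : `|r| <= 1 -> `|Num.floor (M%:R * r)| <= M%:Z.
Proof.
move=> r1; have : `|M%:R * r| <= M%:R by rewrite normrM ger0_norm// ler_piMr.
rewrite !ler_norml => /andP[lo hi]; apply/andP; split.
  by rewrite floor_ge_int rmorphN.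
by rewrite -(ler_int R) (le_trans (floor_le _)).
Qed.

Lemma grid_stepE r : `|r| <= 1 -> grid_step r = (Num.floor (M%:R * r))%:~R / M%:R.
Proof.
move=> /floor_grid_bound; set z := Num.floor _ => zM.
have z_lt : (absz (z + M%:Z)%R < (2 * M).+1)%N by lia.
have z_idx : (Ordinal z_lt)%:Z - M%:Z = z by rewrite /= gez0_abs ?addrK//; lia.
rewrite /grid_step (bigD1 (Ordinal z_lt))//= big1 => [|i neq_i].
  by rewrite indicE mem_set ?z_idx// mulr1 addr0.
rewrite indicE memNset ?mulr0// /grid_cell /= -/z -z_idx => /eqP.
by apply/negP; apply: contra neq_i => /eqP idx; apply/eqP/val_inj => /=; lia.
Qed.

Lemma grid_step_le1 r : `|r| <= 1 -> `|grid_step r| <= 1.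
Proof.
move=> r1; rewrite grid_stepE// normrM normfV normr_nat ler_pdivrMr ?mul1r ?ltr0n//.
by have := @floor_grid_bound r r1; rewrite -(ler_int R) intr_norm.
Qed.

Lemma grid_step_approx r : `|r| <= 1 -> `|r - grid_step r| <= M%:R^-1.
Proof.
move=> r1; rewrite grid_stepE//.
have /andP[lo hi] := floor_itv (M%:R * r); rewrite intrD mulr1z in hi.
have -> : r - (Num.floor (M%:R * r))%:~R / M%:R =
    (M%:R * r - (Num.floor (M%:R * r))%:~R) / M%:R.
  by rewrite mulrBl mulrAC divff ?mul1r.
rewrite normrM normfV ger0_norm ?subr_ge0// gtr0_norm ?ltr0n//.
rewrite ler_pdivrMr ?ltr0n// mulVf//; lra.
Qed.

Lemma bounded_measurable_grid_step : bounded_measurable grid_step.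
Proof.
rewrite /grid_step; apply: bounded_measurable_sum => i; apply: bounded_measurableM.
  exact: bounded_measurable_cst.
apply: bounded_measurable_indic; exact: measurable_grid_cell.
Qed.

End grid_step.

Section Rexpectation.
Context {d : measure_display} {T : measurableType d} {R : realType} (P : probability T R).
Implicit Types f g : T -> R.

Definition Rexpectation f : R := fine (expectation P f).
Local Notation E := Rexpectation.

Lemma bounded_measurable_integrable f : bounded_measurable f ->
  P.-integrable setT (EFin \o f).
Proof.
move=> [mf [c fc]]; apply: measurable_bounded_integrable => //.
  by rewrite (le_lt_trans (probability_le1 P measurableT)) ?ltry.
by exists c; split; [exact: num_real|move=> y cy x _; exact: le_trans (fc x) (ltW cy)].
Qed.

Lemma RexpectationE f : E f = \int[P]_x f x.
Proof. by rewrite /E unlock. Qed.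

Lemma RexpectationK f : bounded_measurable f -> ((E f)%:E = expectation P f)%E.
Proof.
move=> bf; rewrite /E fineK// unlock.
exact/integrable_fin_num/bounded_measurable_integrable.
Qed.

Lemma Rexpectation_cst (a : R) : E (fun=> a) = a.
Proof. by rewrite RexpectationE Rintegral_cst//= probability_setT mulr1. Qed.

Lemma RexpectationD f g : bounded_measurable f -> bounded_measurable g ->
  E (fun x => f x + g x) = E f + E g.
Proof.
by move=> bf bg; rewrite !RexpectationE RintegralD//; exact: bounded_measurable_integrable.
Qed.

Lemma RexpectationB f g : bounded_measurable f -> bounded_measurable g ->
  E (fun x => f x - g x) = E f - E g.
Proof.
by move=> bf bg; rewrite !RexpectationE RintegralB//; exact: bounded_measurable_integrable.
Qed.

Lemma RexpectationZl (a : R) f : bounded_measurable f -> E (fun x => a * f x) = a * E f.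
Proof.
by move=> bf; rewrite !RexpectationE RintegralZl//; exact: bounded_measurable_integrable.
Qed.

Lemma Rexpectation_sum (I : Type) (s : seq I) (F : I -> T -> R) :
  (forall i, bounded_measurable (F i)) ->
  E (fun x => \sum_(i <- s) F i x) = \sum_(i <- s) E (F i).
Proof.
move=> bF; elim: s => [|i s IH].
  by under eq_fun do rewrite big_nil; rewrite Rexpectation_cst big_nil.
under eq_fun do rewrite big_cons.
by rewrite RexpectationD ?big_cons ?IH//; exact: bounded_measurable_sum.
Qed.

Lemma Rexpectation_indic (A : set T) : measurable A -> E (\1_A) = fine (P A).
Proof. by move=> mA; rewrite /E expectation_indic. Qed.

Lemma le_Rexpectation f g : bounded_measurable f -> bounded_measurable g ->
  (forall x, f x <= g x) -> E f <= E g.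
Proof.
move=> bf bg fg.
by rewrite !RexpectationE le_Rintegral//; exact: bounded_measurable_integrable.
Qed.

Lemma normr_Rexpectation_le f (c : R) : bounded_measurable f ->
  (forall x, `|f x| <= c) -> `|E f| <= c.
Proof.
move=> bf fc; rewrite RexpectationE.
apply: le_trans (le_normr_Rintegral _ _) _ => //; first exact: bounded_measurable_integrable.
rewrite -RexpectationE -[leRHS]Rexpectation_cst le_Rexpectation//.
  exact: bounded_measurable_normr.
exact: bounded_measurable_cst.
Qed.

Lemma normr_RexpectationB_le f g (c : R) : bounded_measurable f -> bounded_measurable g ->
  (forall x, `|f x - g x| <= c) -> `|E f - E g| <= c.
Proof.
move=> bf bg fgc; rewrite -RexpectationB// normr_Rexpectation_le//.
exact: bounded_measurableB.
Qed.

Lemma Rexpectation_sqr_le f : bounded_measurable f -> E f ^+ 2 <= E (fun x => f x ^+ 2).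
Proof.
move=> bf; set a := E f.
have bf2 : bounded_measurable (fun x => f x ^+ 2) by exact: bounded_measurableM.
have bfa : bounded_measurable (fun x => 2 * a * f x).
  exact: bounded_measurableM (bounded_measurable_cst _) bf.
have bfB : bounded_measurable (fun x => f x ^+ 2 - 2 * a * f x).
  exact: bounded_measurableB.
have ba2 : bounded_measurable (fun _ : T => a ^+ 2) by exact: bounded_measurable_cst.
have : E (fun=> 0) <= E (fun x => f x ^+ 2 - 2 * a * f x + a ^+ 2).
  apply: le_Rexpectation => [||x]; [exact: bounded_measurable_cst|exact: bounded_measurableD|].
  by rewrite -mulrA mulr_natl [a * _]mulrC -sqrrB sqr_ge0.
by rewrite RexpectationD// RexpectationB// !Rexpectation_cst RexpectationZl// -/a => h; lra.
Qed.

Lemma Rexpectation_normr_le_sqrt f : bounded_measurable f ->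
  E (fun x => `|f x|) <= Num.sqrt (E (fun x => f x ^+ 2)).
Proof.
move=> bf; rewrite (le_trans (ler_norm _))// -sqrtr_sqr ler_wsqrtr//.
have -> : (fun x => f x ^+ 2) = (fun x => `|f x| ^+ 2).
  by apply/funext => x; rewrite real_normK ?num_real.
exact/Rexpectation_sqr_le/bounded_measurable_normr.
Qed.

Lemma Rexpectation_sqr_sum_le (I : finType) (Y : I -> T -> R) :
  (forall i, bounded_measurable (Y i)) ->
  (forall i j, i != j -> E (fun x => Y i x * Y j x) = E (Y i) * E (Y j)) ->
  E (fun x => (\sum_i Y i x) ^+ 2) <=
    \sum_i E (fun x => Y i x ^+ 2) + (\sum_i E (Y i)) ^+ 2.
Proof.
move=> bY uncorrelated.
have bYY i j : bounded_measurable (fun x => Y i x * Y j x) by exact: bounded_measurableM.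
have -> : (fun x => (\sum_i Y i x) ^+ 2) = (fun x => \sum_i \sum_j Y i x * Y j x).
  by apply/funext => x; rewrite expr2 mulr_suml; under eq_bigr do rewrite mulr_sumr.
rewrite Rexpectation_sum => [|i]; last exact: bounded_measurable_sum.
rewrite expr2 mulr_suml addrC -big_split /=; apply: ler_sum => i _.
rewrite Rexpectation_sum// mulr_sumr (bigD1 i)//= [in leRHS](bigD1 i)//=.
under [in leRHS]eq_bigr => j ji do rewrite -uncorrelated 1?eq_sym//.
by rewrite addrAC lerD2r ler_wpDl ?sqr_ge0.
Qed.

End Rexpectation.

Section independence.
Context {d : measure_display} {T : measurableType d} {R : realType} (P : probability T R).
Local Notation E := (Rexpectation P).

Lemma Rexpectation_simple (I : Type) (s : seq I) (c : I -> R) (A : I -> set T) :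
  (forall i, measurable (A i)) ->
  E (fun x => \sum_(i <- s) c i * \1_(A i) x) = \sum_(i <- s) c i * fine (P (A i)).
Proof.
move=> mA; rewrite Rexpectation_sum => [|i]; last first.
  apply: bounded_measurableM; first exact: bounded_measurable_cst.
  exact: bounded_measurable_indic.
apply: eq_bigr => i _; rewrite RexpectationZl ?Rexpectation_indic//.
exact: bounded_measurable_indic.
Qed.

Lemma Rexpectation_simpleM (I J : Type) (s : seq I) (t : seq J) (b : I -> R) (c : J -> R)
    (A : I -> set T) (B : J -> set T) :
  (forall i, measurable (A i)) -> (forall j, measurable (B j)) ->
  (forall i j, P (A i `&` B j) = (P (A i) * P (B j))%E) ->
  E (fun x => (\sum_(i <- s) b i * \1_(A i) x) * (\sum_(j <- t) c j * \1_(B j) x)) =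
  E (fun x => \sum_(i <- s) b i * \1_(A i) x) * E (fun x => \sum_(j <- t) c j * \1_(B j) x).
Proof.
move=> mA mB indepAB; rewrite !Rexpectation_simple// mulr_suml.
transitivity (E (fun x => \sum_(i <- s) \sum_(j <- t) (b i * c j) * \1_(A i `&` B j) x)).
  congr (E _); apply/funext => x; rewrite mulr_suml; apply: eq_bigr => i _.
  by rewrite mulr_sumr; apply: eq_bigr => j _; rewrite indicI mulrACA.
rewrite Rexpectation_sum => [|i]; last first.
  apply: bounded_measurable_sum => j; apply: bounded_measurableM.
    exact: bounded_measurable_cst.
  exact/bounded_measurable_indic/measurableI.
apply: eq_bigr => i _; rewrite Rexpectation_simple => [|j]; last exact: measurableI.
rewrite mulr_sumr; apply: eq_bigr => j _.
by rewrite indepAB fineM ?fin_num_measure// mulrACA.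
Qed.

Definition indep_pair (Y Z : T -> R) := forall A B : set R, measurable A -> measurable B ->
  P (Y @^-1` A `&` Z @^-1` B) = (P (Y @^-1` A) * P (Z @^-1` B))%E.

Lemma indep_pair_comp {f g : R -> R} {Y Z : T -> R} :
  measurable_fun setT f -> measurable_fun setT g ->
  indep_pair Y Z -> indep_pair (f \o Y) (g \o Z).
Proof.
move=> mf mg indepYZ A B mA mB.
exact: indepYZ (measurable_funT_preimage mf mA) (measurable_funT_preimage mg mB).
Qed.

Lemma Rexpectation_grid_stepM (Y Z : T -> R) (m : nat) :
  measurable_fun setT Y -> measurable_fun setT Z -> indep_pair Y Z ->
  E (fun x => grid_step m (Y x) * grid_step m (Z x)) =
  E (fun x => grid_step m (Y x)) * E (fun x => grid_step m (Z x)).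
Proof.
move=> mY mZ indepYZ; apply: Rexpectation_simpleM => [i|j|i j].
- exact: measurable_funT_preimage mY (measurable_grid_cell _ _).
- exact: measurable_funT_preimage mZ (measurable_grid_cell _ _).
- exact: indepYZ (measurable_grid_cell _ _) (measurable_grid_cell _ _).
Qed.

Lemma Rexpectation_indepM (Y Z : T -> R) :
  measurable_fun setT Y -> measurable_fun setT Z ->
  (forall x, `|Y x| <= 1) -> (forall x, `|Z x| <= 1) -> indep_pair Y Z ->
  E (fun x => Y x * Z x) = E Y * E Z.
Proof.
move=> mY mZ Y1 Z1 indepYZ; apply/eqP; rewrite -subr_eq0; apply/eqP.
apply: (@normr_le_divSn_eq0 _ _ 4) => m; set e : R := m.+1%:R^-1.
set Ym := fun x => grid_step m (Y x); set Zm := fun x => grid_step m (Z x).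
have bY : bounded_measurable Y by split => //; exists 1.
have bZ : bounded_measurable Z by split => //; exists 1.
have bYm : bounded_measurable Ym.
  exact: bounded_measurable_comp (bounded_measurable_grid_step m) mY.
have bZm : bounded_measurable Zm.
  exact: bounded_measurable_comp (bounded_measurable_grid_step m) mZ.
have approxY x : `|Y x - Ym x| <= e by exact: grid_step_approx.
have approxZ x : `|Z x - Zm x| <= e by exact: grid_step_approx.
have Ym1 x : `|Ym x| <= 1 by exact: grid_step_le1.
have Zm1 x : `|Zm x| <= 1 by exact: grid_step_le1.
have close_E : `|E (fun x => Y x * Z x) - E Ym * E Zm| <= e + e.
  rewrite -Rexpectation_grid_stepM//; apply: normr_RexpectationB_le => [||x].
  - exact: bounded_measurableM.
  - exact: bounded_measurableM.
  - exact: normr_mulB_le (Y1 x) (Zm1 x) (approxY x) (approxZ x).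
have close_prod : `|E Y * E Z - E Ym * E Zm| <= e + e.
  apply: normr_mulB_le; [exact: normr_Rexpectation_le|exact: normr_Rexpectation_le|..];
  exact: normr_RexpectationB_le.
have -> : E (fun x => Y x * Z x) - E Y * E Z =
    (E (fun x => Y x * Z x) - E Ym * E Zm) - (E Y * E Z - E Ym * E Zm).
  by rewrite opprB addrA subrK.
apply: le_trans (ler_normB _ _) _.
by apply: le_trans (lerD close_E close_prod) _; rewrite mulr_natl -!mulr2n -mulrnA.
Qed.

Lemma mutually_independent_RV_pair {n : nat} {X : 'I_n -> {RV P >-> R}} {j k : 'I_n} :
  mutually_independent_RV X -> j != k -> indep_pair (X j) (X k).
Proof.
move=> indepX jk A B mA mB; have kj : (k == j) = false by rewrite eq_sym (negPf jk).
have := indepX [set j; k]%SET (fun i => if i == j then A else B).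
have -> : \bigcap_(i in [set i | i \in [set j; k]%SET]) (X i @^-1` (if i == j then A else B))
    = X j @^-1` A `&` X k @^-1` B.
  apply/seteqP; split => [w jk_w|w [Aw Bw] i /=].
    by split; [have := jk_w j (set21 j k)|have := jk_w k (set22 j k)]; rewrite /= ?eqxx ?kj.
  by rewrite in_set2 => /orP[] /eqP ->; rewrite ?eqxx ?kj.
move=> -> => [|i _]; last by case: (i == j).
by rewrite (big_setD1 j) ?set21//= setU1K ?inE ?kj// big_set1 eqxx kj.
Qed.

End independence.

Theorem lemma3p10 (R : realType) (d : measure_display) (T : measurableType d)
  (P : probability T R) (n : nat) (X : 'I_n -> {RV P >-> R}) :
  mutually_independent_RV X ->
  (expectation P (fun w => (Num.min `|\sum_(k < n) X k w| 1)%R) <=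
   EFin (Num.sqrt (\sum_(k < n) fine (expectation P (fun w => (tau (X k w) ^+ 2)%R))
                   + (\sum_(k < n) fine (expectation P (fun w => tau (X k w)))) ^+ 2)
         + \sum_(k < n) fine (expectation P (fun w => (tau (X k w) ^+ 2)%R)))%R)%E.
Proof.
move=> indepX; pose Y k w := tau (X k w).
have bY k : bounded_measurable (Y k).
  exact: bounded_measurable_comp bounded_measurable_tau (measurable_funPT (X k)).
have bY2 k : bounded_measurable (fun w => Y k w ^+ 2) by exact: bounded_measurableM.
have bS : bounded_measurable (fun w => \sum_k Y k w) by exact: bounded_measurable_sum.
have bmin : bounded_measurable (fun w => Num.min `|\sum_(k < n) X k w| 1).
  split; last by exists 1 => w; rewrite ger0_norm ?ge_min ?lexx ?orbT// le_min ler01 andbT.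
  apply/measurable_minr/measurable_cst/measurableT_comp => //.
  by apply: measurable_sum => k; exact: measurable_funPT.
rewrite -RexpectationK// lee_fin.
apply: (@le_trans _ _ (Rexpectation P (fun w => `|\sum_k Y k w| + \sum_k Y k w ^+ 2))).
  apply: le_Rexpectation => // [|w]; last exact: min_normr_sum_le.
  apply: bounded_measurableD; first exact: bounded_measurable_normr.
  exact: bounded_measurable_sum.
rewrite RexpectationD ?Rexpectation_sum//; last 2 first.
- exact: bounded_measurable_normr.
- exact: bounded_measurable_sum.
rewrite lerD2r (le_trans (Rexpectation_normr_le_sqrt P _ bS))// ler_wsqrtr//.
apply: Rexpectation_sqr_sum_le => // j k jk.
apply: Rexpectation_indepM; [exact: (bY j).1|exact: (bY k).1|move=> w..|].
- exact: normr_tau_le1.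
- exact: normr_tau_le1.
- have indep_jk := mutually_independent_RV_pair P indepX jk.
  exact (indep_pair_comp P measurable_tau measurable_tau indep_jk).
Qed.
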